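(* Let $\Gamma$ be a weighted digraph with vertex set $V(\Gamma)=\{1,\dots,n\}$, $n>1$, without loops and with strictly positive arc weights, and let $\widehat\Gamma$ be its ground extension. Let $0\le k\le n$ and let $\mathcal I=\{i_1,\dots,i_k\}\subseteq V(\Gamma)$, $\mathcal J=\{j_1,\dots,j_k\}\subseteq V(\Gamma)$. Let $A$ be the set of in-forests of $\Gamma$ in which, for every $u=1,\dots,k$, the vertex $i_u$ belongs to the tree whose root is $j_u$. Let $B$ be the set of in-forests $F$ of $\widehat\Gamma$ consisting of exactly $k+1$ trees such that $0$ is the root of the tree containing $0$ and, for every $u=1,\dots,k$, $i_u$ belongs to the tree of $F$ whose root is $j_u$. Then there is a weight-preserving bijection between $A$ and $B$.
   Context: $W=(w_{ij})$ is the matrix of arc weights ($w_{ij}>0$ iff there is an arc $i\to j$, else $0$). The weight of a subgraph is the product of its arc weights (1 if no arcs). A converging tree is a weakly connected digraph with one vertex (the root) of outdegree 0 and all others of outdegree 1; an in-forest of a digraph is a spanning subgraph whose weak components are converging trees. The ground extension $\widehat\Gamma$ of $\Gamma$ is the weighted digraph with vertex set $V(\Gamma)\cup\{0\}$, arc set $E(\Gamma)\cup\{(j,0):j\in V(\Gamma)\}$, the arcs of $\Gamma$ keeping their weights and each arc $(j,0)$ having weight 1. *)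

From HB Require Import structures.
From mathcomp Require Import all_boot all_order all_algebra.
Set Implicit Arguments. Unset Strict Implicit. Unset Printing Implicit Defensive.
Import Order.TTheory GRing.Theory Num.Theory.
Local Open Scope ring_scope.

(* A spanning subgraph of a digraph on the finite vertex type T is given by
   its arc set F : {set T * T}. *)
Section Digraphs.
Variable T : finType.

Definition outdeg (F : {set T * T}) (x : T) : nat := #|[set y | (x, y) \in F]|.

Definition wrel (F : {set T * T}) : rel T := fun x y => ((x, y) \in F) || ((y, x) \in F).
Definition wconn (F : {set T * T}) (x y : T) : bool := connect (wrel F) x y.

Definition wcomp (F : {set T * T}) (x : T) : {set T} := [set y | wconn F x y].

Definition converging_tree_comp (F : {set T * T}) (C : {set T}) : Prop :=
  exists r, [/\ r \in C, outdeg F r = 0%N &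
             forall v, v \in C -> v != r -> outdeg F v = 1%N].

Definition in_forest (E F : {set T * T}) : Prop :=
  F \subset E /\ forall x, converging_tree_comp F (wcomp F x).

Definition is_root (F : {set T * T}) (r : T) : bool := outdeg F r == 0%N.
Definition in_tree_rooted (F : {set T * T}) (v r : T) : bool :=
  is_root F r && wconn F v r.

(* number of trees of an in-forest = number of roots *)
Definition ntrees (F : {set T * T}) : nat := #|[set r | is_root F r]|.

Definition sg_weight (R : comPzRingType) (w : T -> T -> R) (F : {set T * T}) : R :=
  \prod_(a in F) w a.1 a.2.
End Digraphs.

(* The weighted digraph Gamma on 'I_n given by its weight matrix W:
   arc i -> j iff W i j > 0. *)
Definition arcs (R : numDomainType) (n : nat) (W : 'M[R]_n) : {set 'I_n * 'I_n} :=
  [set a | 0 < W a.1 a.2].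

(* Ground extension: vertex set option 'I_n, None playing the role of 0. *)
Definition ground_arcs (R : numDomainType) (n : nat) (W : 'M[R]_n)
  : {set option 'I_n * option 'I_n} :=
  [set a | match a with
           | (Some i, Some j) => 0 < W i j
           | (Some _, None) => true
           | _ => false
           end].

Definition ground_weight (R : numDomainType) (n : nat) (W : 'M[R]_n)
  (x y : option 'I_n) : R :=
  match x, y with
  | Some i, Some j => W i j
  | Some _, None => 1
  | _, _ => 0
  end.

Definition inA (R : numDomainType) (n k : nat) (W : 'M[R]_n) (I J : 'I_k -> 'I_n)
  (F : {set 'I_n * 'I_n}) : Prop :=
  in_forest (arcs W) F /\ forall u, in_tree_rooted F (I u) (J u).

Definition inB (R : numDomainType) (n k : nat) (W : 'M[R]_n) (I J : 'I_k -> 'I_n)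
  (F : {set option 'I_n * option 'I_n}) : Prop :=
  [/\ in_forest (ground_arcs W) F, ntrees F = k.+1, is_root F None &
      forall u, in_tree_rooted F (Some (I u)) (Some (J u))].

(* Attach every root of an in-forest F of Gamma that is not one of the j_u to
   the new vertex 0 by an arc of weight 1.  The result is an in-forest of the
   ground extension whose roots are exactly 0, j_1, ..., j_k, and it has the
   weight of F.  Conversely, a forest G in B has at least the k + 1 roots
   0, j_1, ..., j_k, hence no others; so the tails of the arcs of G into 0 are
   exactly the roots of the restriction of G to Gamma other than the j_u, and
   deleting the arcs into 0 inverts the construction. *)
From HB Require Import structures.
From mathcomp Require Import all_boot all_order all_algebra.
Set Implicit Arguments. Unset Strict Implicit. Unset Printing Implicit Defensive.
Import Order.TTheory GRing.Theory Num.Theory.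
Local Open Scope ring_scope.

Lemma connect_propagate (T : finType) (e : rel T) (P : T -> Prop) x y :
  (forall a b, P a -> e a b -> P b) -> P x -> connect e x y -> P y.
Proof.
move=> Pe Px /connectP [p pth ->]; elim: p x Px pth => [|c p IHp] x Px //=.
by case/andP=> exc; apply: IHp; apply: Pe exc.
Qed.

Lemma connect_homo (T1 T2 : finType) (e1 : rel T1) (e2 : rel T2) (h : T1 -> T2) x y :
  (forall a b, e1 a b -> e2 (h a) (h b)) -> connect e1 x y -> connect e2 (h x) (h y).
Proof.
move=> he; apply: (connect_propagate (P := fun z => connect e2 (h x) (h z))) => //.
by move=> a b xa /he ab; apply: connect_trans xa (connect1 ab).
Qed.

Section InForests.
Variable T : finType.
Implicit Types (F : {set T * T}) (r v x y : T).

Definition arc_rel F : rel T := fun x y => (x, y) \in F.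

Lemma is_rootP F r : reflect (forall y, (r, y) \notin F) (is_root F r).
Proof.
rewrite /is_root /outdeg cards_eq0; apply: (iffP eqP) => [F0 y|noF].
  by apply/negP=> ry; have := in_set0 y; rewrite -F0 inE ry.
by apply/setP=> y; rewrite !inE (negbTE (noF y)).
Qed.

Lemma outdeg_le1P F x :
  reflect (forall y1 y2, (x, y1) \in F -> (x, y2) \in F -> y1 = y2)
          (outdeg F x <= 1)%N.
Proof.
rewrite /outdeg; apply: (iffP card_le1_eqP) => [F1 y1 y2 h1 h2|F1 y1 y2].
  by apply/esym/F1; rewrite inE.
by rewrite !inE => h1 h2; apply/esym/F1.
Qed.

Lemma wconn_sym F x y : wconn F x y = wconn F y x.
Proof. by apply: sym_connect_sym => a b; rewrite /wrel orbC. Qed.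

Lemma connect_arc_wconn F x y : connect (arc_rel F) x y -> wconn F x y.
Proof. by apply: connect_sub => a b ab; apply/connect1/orP; left. Qed.

Lemma connect_from_root F r y : is_root F r -> connect (arc_rel F) r y -> y = r.
Proof.
move=> /is_rootP noF /connectP [[|c p] /=] => [_ -> //|/andP [rc _] _].
by have := noF c; rewrite /arc_rel in rc; rewrite rc.
Qed.

(* Weak connectivity to the root r propagates reachability of r, since the
   unique arc out of a vertex that reaches r lies on its path to r. *)
Lemma wconn_root_connect F r y : (forall v, outdeg F v <= 1)%N ->
  is_root F r -> wconn F y r -> connect (arc_rel F) y r.
Proof.
move=> le1 rr; rewrite wconn_sym.
apply: (connect_propagate (P := fun z => connect (arc_rel F) z r)) => // a b ar.
case/orP=> [ab|ba]; last exact: connect_trans (connect1 ba) ar.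
case/connectP: ar => [[|c p] /=] => [_ ar|/andP [ac pth] ->].
  by move/is_rootP: rr => /(_ b); rewrite ar ab.
have <- := outdeg_le1P _ _ (le1 a) _ _ ac ab.
by apply/connectP; exists p.
Qed.

Lemma converging_treesP F :
  (forall x, converging_tree_comp F (wcomp F x)) <->
  (forall v, outdeg F v <= 1)%N /\
  (forall v, exists2 r, is_root F r & connect (arc_rel F) v r).
Proof.
split=> [trees|[le1 reach] x].
  have le1 v : (outdeg F v <= 1)%N.
    have [r [_ r0 deg1]] := trees v.
    have vv : v \in wcomp F v by rewrite inE /wconn connect0.
    by case: (eqVneq v r) => [->|/(deg1 _ vv) ->]; rewrite ?r0.
  split=> // v; have [r [vr r0 _]] := trees v.
  have rr : is_root F r by apply/eqP.
  by exists r => //; apply: wconn_root_connect le1 rr _; rewrite inE in vr.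
have [r rr xr] := reach x; exists r; split; first by rewrite inE connect_arc_wconn.
  exact/eqP.
move=> v; rewrite inE => xv vr.
have := le1 v; rewrite leq_eqVlt ltnS leqn0 => /orP [/eqP //|rv].
have vr_conn : wconn F v r.
  have vx : wconn F v x by rewrite wconn_sym.
  exact: connect_trans vx (connect_arc_wconn xr).
have := connect_from_root rv (wconn_root_connect le1 rr vr_conn).
by move=> rv_eq; rewrite rv_eq eqxx in vr.
Qed.

End InForests.

Section Grounding.
Variables (T : finType) (S : {set T}).
Implicit Types (F : {set T * T}) (G : {set option T * option T}) (x y z : T).

Definition ground F : {set option T * option T} :=
  [set a | match a with
           | (Some x, Some y) => (x, y) \in F
           | (Some x, None) => is_root F x && (x \notin S)
           | _ => false end].

Definition restrict G : {set T * T} := [set a | (Some a.1, Some a.2) \in G].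

Definition ground_roots : {set option T} := None |: [set Some x | x in S].

Lemma ground_SS F x y : ((Some x, Some y) \in ground F) = ((x, y) \in F).
Proof. by rewrite inE. Qed.

Lemma ground_SN F x : ((Some x, None) \in ground F) = is_root F x && (x \notin S).
Proof. by rewrite inE. Qed.

Lemma ground_N F b : ((None, b) \in ground F) = false.
Proof. by rewrite inE; case: b. Qed.

Lemma in_restrict G x y : ((x, y) \in restrict G) = ((Some x, Some y) \in G).
Proof. by rewrite inE. Qed.

Lemma restrict_ground F : restrict (ground F) = F.
Proof. by apply/setP => -[x y]; rewrite in_restrict ground_SS. Qed.

Lemma mem_ground_roots x : (Some x \in ground_roots) = (x \in S).
Proof. by rewrite !inE /= mem_imset //; apply: Some_inj. Qed.

Lemma card_ground_roots : #|ground_roots| = #|S|.+1.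
Proof.
rewrite cardsU1 card_imset; last exact: Some_inj.
suff -> : None \notin [set Some x | x in S] by [].
by apply/imsetP => -[].
Qed.

Lemma is_root_ground_None F : is_root (ground F) None.
Proof. by apply/is_rootP => b; rewrite ground_N. Qed.

Lemma is_root_ground_Some F x : is_root (ground F) (Some x) = is_root F x && (x \in S).
Proof.
apply/is_rootP/andP => [noG|[/is_rootP noF xS] [y|]]; last by rewrite ground_SN xS andbF.
  have rx : is_root F x by apply/is_rootP => y; rewrite -ground_SS.
  by split=> //; have := noG None; rewrite ground_SN rx negbK.
by rewrite ground_SS.
Qed.

Lemma roots_ground F : S \subset [set r | is_root F r] ->
  [set r | is_root (ground F) r] = ground_roots.
Proof.
move=> /subsetP rS; apply/setP => -[x|]; last by rewrite !inE is_root_ground_None.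
rewrite mem_ground_roots inE is_root_ground_Some andb_idl // => xS.
by have := rS x xS; rewrite inE.
Qed.

Lemma connect_ground F x y :
  connect (arc_rel F) x y -> connect (arc_rel (ground F)) (Some x) (Some y).
Proof. by apply: connect_homo => a b; rewrite /arc_rel ground_SS. Qed.

Lemma wconn_ground F x y : wconn F x y -> wconn (ground F) (Some x) (Some y).
Proof. by apply: connect_homo => a b; rewrite /wrel !ground_SS. Qed.

Lemma ground_converging F :
  (forall x, converging_tree_comp F (wcomp F x)) ->
  forall b, converging_tree_comp (ground F) (wcomp (ground F) b).
Proof.
case/converging_treesP=> le1 reach; apply/converging_treesP; split.
  case=> [x|]; last by rewrite (eqP (is_root_ground_None F)).
  apply/outdeg_le1P => -[y1|] [y2|]; rewrite ?ground_SS ?ground_SN //.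
  - by move=> h1 h2; congr Some; apply: (outdeg_le1P _ _ (le1 x)).
  - by move=> xy1 /andP [/is_rootP /(_ y1)]; rewrite xy1.
  - by move=> /andP [/is_rootP /(_ y2) noxy2 _] xy2; rewrite xy2 in noxy2.
case=> [x|]; last by exists None; rewrite ?is_root_ground_None.
have [r rr /connect_ground xr] := reach x.
have [rS|rNS] := boolP (r \in S).
  by exists (Some r); rewrite // is_root_ground_Some rr.
exists None; first exact: is_root_ground_None.
by apply: connect_trans xr (connect1 _); rewrite /arc_rel ground_SN rr rNS.
Qed.

Lemma is_root_restrict G z : is_root G (Some z) -> is_root (restrict G) z.
Proof. by move/is_rootP=> noG; apply/is_rootP => y; rewrite in_restrict. Qed.

Lemma arc_None_is_root_restrict G z : (outdeg G (Some z) <= 1)%N ->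
  (Some z, None) \in G -> is_root (restrict G) z.
Proof.
move=> /outdeg_le1P le1 zN; apply/is_rootP => y; rewrite in_restrict.
by apply/negP => /(le1 _ _ zN).
Qed.

Lemma connect_restrict G x b : is_root G None ->
  connect (arc_rel G) (Some x) b ->
  match b return Prop with
  | Some z => connect (arc_rel (restrict G)) x z
  | None => exists2 z, connect (arc_rel (restrict G)) x z & (Some z, None) \in G
  end.
Proof.
move=> /is_rootP noN xb; pattern b; apply: (connect_propagate _ _ xb) => [a c|];
  last exact: connect0.
case: a => [y xy|[]]; last by rewrite /arc_rel (negbTE (noN c)).
case: c => [z yz|yN]; last by exists y.
by apply: connect_trans xy (connect1 _); rewrite /arc_rel in_restrict.
Qed.

Lemma restrict_converging G : is_root G None ->
  (forall b, converging_tree_comp G (wcomp G b)) ->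
  forall x, converging_tree_comp (restrict G) (wcomp (restrict G) x).
Proof.
move=> rN /converging_treesP [le1 reach]; apply/converging_treesP; split=> [x|x].
  apply/outdeg_le1P => y1 y2; rewrite !in_restrict => h1 h2.
  by case: (outdeg_le1P _ _ (le1 (Some x)) _ _ h1 h2).
have [[z|] rr /(connect_restrict rN)] := reach (Some x).
  by exists z => //; apply: is_root_restrict.
by case=> z xz zN; exists z => //; apply: arc_None_is_root_restrict.
Qed.

Lemma in_tree_rooted_restrict G x z :
  is_root G None -> (forall b, outdeg G b <= 1)%N ->
  in_tree_rooted G (Some x) (Some z) -> in_tree_rooted (restrict G) x z.
Proof.
move=> rN le1 /andP [rz /(wconn_root_connect le1 rz) xz].
by rewrite /in_tree_rooted is_root_restrict // connect_arc_wconn // (connect_restrict rN xz).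
Qed.

Lemma ground_restrict G : is_root G None -> (forall b, outdeg G b <= 1)%N ->
  [set r | is_root G r] = ground_roots -> ground (restrict G) = G.
Proof.
move=> /is_rootP noN le1 rootsG.
have rootG x : is_root G (Some x) = (x \in S).
  by rewrite -mem_ground_roots -rootsG inE.
apply/setP => -[[x|] [y|]]; rewrite ?ground_SS ?in_restrict ?ground_N ?(negbTE (noN _)) //.
rewrite ground_SN -rootG; apply/idP/idP => [/andP [rx xNr]|xN].
  apply/negPn/negP => xNG; case/negP: xNr; apply/is_rootP => -[y|] //.
  by move/is_rootP: rx => /(_ y); rewrite in_restrict.
rewrite arc_None_is_root_restrict //=.
by apply/negP => /is_rootP /(_ None); rewrite xN.
Qed.

Lemma sg_weight_ground (R : comPzRingType) (w : T -> T -> R)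
    (wg : option T -> option T -> R) F :
  (forall x y, wg (Some x) (Some y) = w x y) -> (forall x, wg (Some x) None = 1) ->
  sg_weight wg (ground F) = sg_weight w F.
Proof.
move=> wSS wSN; rewrite /sg_weight (bigID (fun a => a.2 == None)) /=.
have -> : \prod_(a in ground F | a.2 == None) wg a.1 a.2 = 1.
  apply: big1 => -[[x|] b] /andP [aG /eqP /= ->]; last by rewrite ground_N in aG.
  exact: wSN.
pose lift a : option T * option T := (Some a.1, Some a.2).
have lift_inj : injective lift by move=> [a1 a2] [b1 b2] [-> ->].
have mem_lift a : (a \in ground F) && (a.2 != None) = (a \in lift @: F).
  case: a => -[x|] [y|]; rewrite ?ground_SN ?ground_N ?andbF /=;
    first (by rewrite ground_SS andbT -[(Some x, Some y)]/(lift (x, y)) mem_imset);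
  by apply/esym/negP => /imsetP [[a b] _ /= /pair_equal_spec []].
rewrite mul1r (eq_bigl _ _ mem_lift) big_imset /=; last by move=> ? ? _ _ /lift_inj.
by apply: eq_bigr => -[x y] _; rewrite wSS.
Qed.

End Grounding.

Section ForestsAB.
Variables (R : realFieldType) (n k : nat) (W : 'M[R]_n) (I J : 'I_k -> 'I_n).
Hypothesis J_inj : injective J.

Let Jset : {set 'I_n} := [set J u | u : 'I_k].

Lemma card_ground_roots_J : #|ground_roots Jset| = k.+1.
Proof. by rewrite card_ground_roots card_imset // card_ord. Qed.

Lemma inA_ground F : inA W I J F -> inB W I J (ground Jset F).
Proof.
move=> [[FW trees] treeIJ].
have rJ u : is_root F (J u) by case/andP: (treeIJ u).
have Jroots : Jset \subset [set r | is_root F r].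
  by apply/subsetP => _ /imsetP [u _ ->]; rewrite inE.
split.
- split; last exact: ground_converging.
  apply/subsetP => -[[x|] [y|]]; rewrite ?ground_SS ?ground_SN ?ground_N ?inE //.
  by move/(subsetP FW); rewrite inE.
- by rewrite /ntrees roots_ground // card_ground_roots_J.
- exact: is_root_ground_None.
- move=> u; case/andP: (treeIJ u) => _ /wconn_ground IJ.
  by rewrite /in_tree_rooted IJ is_root_ground_Some rJ imset_f.
Qed.

Lemma inB_restrict G : inB W I J G ->
  inA W I J (restrict G) /\ ground Jset (restrict G) = G.
Proof.
move=> [[GW trees] ntreesG rN treeIJ].
have [le1 _] := (converging_treesP G).1 trees.
have rootsG : [set r | is_root G r] = ground_roots Jset.
  apply/esym/setP/subset_cardP; first by rewrite card_ground_roots_J -ntreesG.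
  apply/subsetP => r; rewrite !inE => /orP [/eqP -> //|/imsetP [_ /imsetP [u _ ->] ->]].
  by case/andP: (treeIJ u).
split; last exact: ground_restrict.
split=> [|u]; last exact: in_tree_rooted_restrict.
split; last exact: restrict_converging.
by apply/subsetP => -[x y]; rewrite in_restrict => /(subsetP GW); rewrite !inE.
Qed.

End ForestsAB.

Theorem lemma1 (R : realFieldType) (n : nat) (W : 'M[R]_n) (k : nat)
  (I J : 'I_k -> 'I_n) :
  (1 < n)%N ->
  (forall i j, 0 <= W i j) ->
  (forall i, W i i = 0) ->
  (k <= n)%N -> injective I -> injective J ->
  exists f : {set 'I_n * 'I_n} -> {set option 'I_n * option 'I_n},
    [/\ forall F, inA W I J F -> inB W I J (f F),
        forall F1 F2, inA W I J F1 -> inA W I J F2 -> f F1 = f F2 -> F1 = F2,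
        forall G, inB W I J G -> exists2 F, inA W I J F & f F = G &
        forall F, inA W I J F ->
          sg_weight (ground_weight W) (f F) = sg_weight (fun i j => W i j) F].
Proof.
move=> _ _ _ _ _ J_inj; exists (ground [set J u | u : 'I_k]); split.
- exact: inA_ground.
- by move=> F1 F2 _ _ /(congr1 (@restrict _)); rewrite !restrict_ground.
- by move=> G /(inB_restrict J_inj) [GA GK]; exists (restrict G).
- by move=> F _; apply: sg_weight_ground.
Qed.
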